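(* Let $X=(X,\preceq,\delta)$ be a labeled poset, $Y\subset X$ and $\overline X\in\operatorname{Tot}(X)$, and put $W=P_Y(\overline X)$. Then the relation $\sim_T$ on $P_Y^{-1}(W)$, defined by $\overline X'\sim_T\overline X''$ if and only if $\overline X'=T_{Y_1,Y_2}(\overline X'')$ for some $Y_1,Y_2\in\operatorname{Tot}(Y)$, is an equivalence relation.
   Context: A labeled poset is $(X,\preceq,\delta)$ with $X$ finite, $\preceq$ a partial order and $\delta$ a labeling map; $Y\subset X$ carries the restricted order and labeling. $\operatorname{Tot}(X)$ is the set of $(X,\preceq',\delta)$ with $\preceq'\supseteq\preceq$ a total order. $P_Y:\operatorname{Tot}(X)\to\operatorname{Tot}(X\setminus Y)$ sends a total order on $X$ to its restriction to $X\setminus Y$, and $P_Y^{-1}(W)$ is the set of $\overline X\in\operatorname{Tot}(X)$ whose restriction to $X\setminus Y$ is $W$. For $Y_1,Y_2\in\operatorname{Tot}(Y)$ with orders $\preceq_{Y_1},\preceq_{Y_2}$ and a total order $\overline X=(X,\preceq_{\overline X},\delta)$, $T_{Y_1,Y_2}(\overline X)=(X,(\preceq_{\overline X}\setminus\preceq_{Y_1})\cup\preceq_{Y_2},\delta)$. *)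

From mathcomp Require Import all_boot.
Set Implicit Arguments. Unset Strict Implicit. Unset Printing Implicit Defensive.

(* A (binary) relation on a finite type T is a set of pairs; (x,y) \in r
   means x ⪯ y.  A relation "on A" (A : {set T}) is a subset of A × A. *)
Section Defs.
Variable T : finType.
Implicit Types (A Y : {set T}) (r : {set T * T}).

Definition rel_on A r : Prop :=
  forall p, p \in r -> (p.1 \in A) && (p.2 \in A).

Definition partial_order_on A r : Prop :=
  [/\ rel_on A r,
      (forall x, x \in A -> (x, x) \in r),
      (forall x y, (x, y) \in r -> (y, x) \in r -> x = y) &
      (forall x y z, (x, y) \in r -> (y, z) \in r -> (x, z) \in r)].

Definition total_order_on A r : Prop :=
  partial_order_on A r /\
  (forall x y, x \in A -> y \in A -> ((x, y) \in r) || ((y, x) \in r)).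

Definition restr A r : {set T * T} :=
  [set p in r | (p.1 \in A) && (p.2 \in A)].

Definition Tot A (le : {set T * T}) (r : {set T * T}) : Prop :=
  total_order_on A r /\ le \subset r.

Definition PYinv (le : {set T * T}) Y (W : {set T * T}) (r : {set T * T}) : Prop :=
  Tot setT le r /\ restr (~: Y) r = W.

Definition Top (Y1 Y2 Xb : {set T * T}) : {set T * T} := (Xb :\: Y1) :|: Y2.

Definition simT (le : {set T * T}) Y (X1 X2 : {set T * T}) : Prop :=
  exists Y1 Y2 : {set T * T}, [/\ Tot Y (restr Y le) Y1, Tot Y (restr Y le) Y2 & X1 = Top Y1 Y2 X2].

Definition equivalence_on (U : Type) (P : U -> Prop) (R : U -> U -> Prop) : Prop :=
  [/\ (forall x, P x -> R x x),
      (forall x y, P x -> P y -> R x y -> R y x) &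
      (forall x y z, P x -> P y -> P z -> R x y -> R y z -> R x z)].
End Defs.

From mathcomp Require Import all_boot.

(* Two total orders are ~_T-related exactly when they agree on every pair not
   lying in Y x Y: the sets Y1, Y2 are relations on Y, so T_{Y1,Y2} only
   changes pairs inside Y x Y, and conversely any X' is recovered from X'' by
   removing the restriction of X'' to Y and adding that of X'.  Agreement off
   Y x Y is clearly an equivalence relation. *)

Section RestrictedOrders.
Variable T : finType.
Implicit Types (A B Y : {set T}) (le r : {set T * T}).

Lemma restrE A r : restr A r = r :&: setX A A.
Proof. by apply/setP=> p; rewrite !inE. Qed.

Lemma restrS A le r : le \subset r -> restr A le \subset restr A r.
Proof. by move=> le_r; rewrite !restrE setSI. Qed.

Lemma total_order_on_restr A B r :
  B \subset A -> total_order_on A r -> total_order_on B (restr B r).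
Proof.
move=> /subsetP sBA [[_ refl anti trans] tot].
split; [split|].
- by move=> p; rewrite inE => /andP[_ ->].
- by move=> x xB; rewrite !inE /= xB refl ?sBA.
- by move=> x y; rewrite !inE => /andP[xy _] /andP[yx _]; apply: anti.
- move=> x y z; rewrite !inE /= => /andP[xy /andP[-> _]] /andP[yz /andP[_ ->]].
  by rewrite (trans _ _ _ xy yz).
- by move=> x y xB yB; rewrite !inE /= xB yB !andbT tot ?sBA.
Qed.

Lemma Tot_restr A B le r :
  B \subset A -> Tot A le r -> Tot B (restr B le) (restr B r).
Proof.
by move=> sBA [tot_r le_r]; split; [exact: total_order_on_restr tot_r | exact: restrS].
Qed.

Lemma simT_agree le Y X1 X2 :
  simT le Y X1 X2 -> {in ~: setX Y Y, X1 =i X2}.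
Proof.
move=> [Y1 [Y2 [[[[onY1 _ _ _] _] _] [[[onY2 _ _ _] _] _] ->]]] p.
have offY (Z : {set T * T}) : rel_on Y Z -> p \notin setX Y Y -> p \notin Z.
  by move=> onZ pY; apply: contra pY => /onZ; rewrite inE.
rewrite inE /Top => pY.
by rewrite !inE (negbTE (offY _ onY1 pY)) (negbTE (offY _ onY2 pY)) orbF.
Qed.

Lemma agree_simT le Y X1 X2 :
  Tot setT le X1 -> Tot setT le X2 ->
  {in ~: setX Y Y, X1 =i X2} -> simT le Y X1 X2.
Proof.
move=> tot1 tot2 agree.
exists (restr Y X2), (restr Y X1); split; try exact: Tot_restr (subsetT Y) _.
apply/setP=> p; rewrite /Top !restrE in_setU in_setD !in_setI.
have [pY|pY] := boolP (p \in setX Y Y); first by rewrite !andbT andNb.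
by rewrite !andbF orbF /= agree // inE pY.
Qed.

End RestrictedOrders.

Theorem mainTheorem4 (T : finType) (le : {set T * T}) (Y : {set T})
    (Xb : {set T * T}) :
  partial_order_on setT le ->
  Tot setT le Xb ->
  let W := restr (~: Y) Xb in
  equivalence_on (PYinv le Y W) (simT le Y).
Proof.
move=> _ _ W; split.
- by move=> X [totX _]; apply: agree_simT.
- move=> X1 X2 [tot1 _] [tot2 _] /simT_agree agree12.
  by apply: agree_simT => // p pY; rewrite agree12.
- move=> X1 X2 X3 [tot1 _] _ [tot3 _] /simT_agree agree12 /simT_agree agree23.
  by apply: agree_simT => // p pY; rewrite agree12 ?agree23.
Qed.
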